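(* Let $\Bbbk$ be an algebraically closed field of characteristic zero, $G$ a finite abelian group, $u\in G$ of order $2$, and $V$ a finite-dimensional $\Bbbk G$-module with $u\cdot v=-v$ for all $v\in V$. Let $(T,\beta,\alpha,\psi)$ and $(T',\beta',\alpha',\psi')$ be compatible data. Then: (1) $(T\circ T',\beta\circ T'+\beta',\alpha\circ\alpha',\psi\psi')$ is a compatible datum; (2) the set of compatible data with the product $$(T,\beta,\alpha,\psi)\bullet(T',\beta',\alpha',\psi')=(T\circ T',\beta\circ T'+\beta',\alpha\circ\alpha',\psi\psi')$$ is a group with identity $(\mathrm{Id}_V,0,\mathrm{id}_G,1)$.
   Context: A compatible datum $(T,\beta,\alpha,\psi)$ consists of: a group automorphism $\alpha:G\to G$ with $\alpha(u)=u$; a linear automorphism $T:V\to V$ with $T(g\cdot v)=\alpha(g)\cdot T(v)$ for all $v\in V$, $g\in G$; a symmetric $G$-invariant bilinear form $\beta:V\times V\to\Bbbk$; and $\psi\in H^2(G,\Bbbk^\times)$. Here $(\beta\circ T')(v,w)=\beta(T'(v),T'(w))$ and $\psi\psi'$ is the product in $H^2(G,\Bbbk^\times)$. *)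

From HB Require Import structures.
From mathcomp Require Import all_boot all_order all_algebra all_fingroup.
From mathcomp Require Import mxrepresentation.
Set Implicit Arguments. Unset Strict Implicit. Unset Printing Implicit Defensive.
Import GRing.Theory.
Local Open Scope group_scope.

(* Conventions:
   - V = 'rV[k]_n (row vectors), G acts via a matrix representation rG,
     g . v := v *m rG g.
   - A linear map T : V -> V is a matrix, T(v) := v *m T, so (T o T')(v) =
     v *m T' *m T, i.e. the matrix of T o T' is T' *m T.
   - A bilinear form beta on V is a matrix B, beta(v,w) := (v *m B *m w^T) 0 0.
     Then (beta o T')(v,w) = beta(T' v, T' w) has matrix T' *m B *m T'^T.
   - Automorphisms of G are elements of Aut G (permutations of gT that restrict
     to automorphisms of G and are the identity outside G); composition
     alpha o alpha' is the permutation product alpha' * alpha.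
   - H^2(G, k^x) (trivial action): 2-cochains are functions gT -> gT -> k
     (supported in G: equal to 1 outside G x G); an element of H^2 is a
     cohomology class, represented as the set (predicate) of all normalized
     cocycles in it. *)

Section Defs.
Variables (k : fieldType) (gT : finGroupType) (G : {group gT}).

Definition bform n (B : 'M[k]_n) (v w : 'rV[k]_n) : k := (v *m B *m w^T)%R ord0 ord0.

Definition cochain2 := gT -> gT -> k.

Definition is_cocycle2 (c : cochain2) : Prop :=
  [/\ (forall x y, x \in G -> y \in G -> c x y != 0%R),
      (forall x y, (x \notin G) || (y \notin G) -> c x y = 1%R) &
      (forall x y z, x \in G -> y \in G -> z \in G ->
          c x y * c (x * y)%g z = c y z * c x (y * z)%g)%R].

Definition cohomologous (c c' : cochain2) : Prop :=
  exists f : gT -> k, (forall x, x \in G -> f x != 0%R) /\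
    (forall x y, x \in G -> y \in G ->
        c' x y = (c x y * (f x * f y / f (x * y)%g)))%R.

Definition coh_class (c : cochain2) : cochain2 -> Prop :=
  fun c' => is_cocycle2 c' /\ cohomologous c c'.

Definition is_H2 (P : cochain2 -> Prop) : Prop :=
  exists c, is_cocycle2 c /\ P = coh_class c.

Definition H2mul (P Q : cochain2 -> Prop) : cochain2 -> Prop :=
  fun c => exists a b, P a /\ Q b /\ c = (fun x y => a x y * b x y)%R.

Definition H2one : cochain2 -> Prop := coh_class (fun _ _ => 1%R).

End Defs.

Record datum (k : fieldType) (gT : finGroupType) (n : nat) := Datum {
  dT : 'M[k]_n;
  dB : 'M[k]_n;
  dalpha : {perm gT};
  dpsi : cochain2 k gT -> Prop }.

Section Compat.
Variables (k : fieldType) (gT : finGroupType) (G : {group gT}) (u : gT)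
  (n : nat) (rG : mx_representation k G n).

Definition compatible (d : datum k gT n) : Prop :=
  let T := dT d in let B := dB d in let al := dalpha d in
  [/\ al \in Aut G /\ al u = u,
      T \in unitmx /\
        (forall g (v : 'rV[k]_n), g \in G -> (v *m rG g) *m T = (v *m T) *m rG (al g))%R,
      (forall v w, bform B v w = bform B w v) /\
        (forall g v w, g \in G -> bform B (v *m rG g) (w *m rG g) = bform B v w) &
      is_H2 G (dpsi d)].

Definition dmul (d d' : datum k gT n) : datum k gT n :=
  Datum (dT d' *m dT d)%R (dT d' *m dB d *m (dT d')^T + dB d')%R
        (dalpha d' * dalpha d)%g (H2mul (dpsi d) (dpsi d')).

Definition dunit : datum k gT n := Datum 1%:M%R 0%R 1%g (H2one G).

End Compat.

Definition is_group_set (D : Type) (S : D -> Prop) (op : D -> D -> D) (e : D) : Prop :=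
  [/\ S e,
      (forall x y, S x -> S y -> S (op x y)),
      (forall x y z, S x -> S y -> S z -> op x (op y z) = op (op x y) z),
      (forall x, S x -> op e x = x /\ op x e = x) &
      (forall x, S x -> exists y, S y /\ op x y = e /\ op y x = e)].

(* The components of a datum compose independently: the maps T and the
   automorphisms compose as in GL(V) and Aut G (the intertwining identity
   chains through T' then T), the forms transform by the crossed rule
   B o T' + B', which is a group law because pulling back along T' is additive
   and functorial, and H^2(G, k^x) is a group under pointwise products of
   representing cocycles. *)
From mathcomp Require Import all_boot all_algebra all_fingroup.
From mathcomp Require Import mxrepresentation.
From mathcomp.algebra_tactics Require Import ring.
From Stdlib Require Import FunctionalExtensionality PropExtensionality.
Import GRing.Theory.

Set Implicit Arguments.
Unset Strict Implicit.
Unset Printing Implicit Defensive.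

Section Cohomology.
Variables (k : fieldType) (gT : finGroupType) (G : {group gT}).
Local Open Scope ring_scope.
Implicit Types (a b c : cochain2 k gT) (P Q R : cochain2 k gT -> Prop).

Definition H2inv P : cochain2 k gT -> Prop := fun c => P (fun x y => (c x y)^-1).

Lemma cochain2_ext a b : (forall x y, a x y = b x y) -> a = b.
Proof. by move=> eq_ab; do 2!apply: functional_extensionality => ?. Qed.

Lemma cocycle2_neq0 c : is_cocycle2 G c -> forall x y, c x y != 0.
Proof.
case=> c_neq0 c_out _ x y.
have [xG|xG] := boolP (x \in G); have [yG|yG] := boolP (y \in G).
- exact: c_neq0.
all: by rewrite c_out ?xG ?yG ?orbT ?oner_neq0.
Qed.

Lemma cocycle2_1 : is_cocycle2 G (fun _ _ => 1 : k).
Proof. by split=> // *; rewrite ?oner_neq0 ?mulr1. Qed.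

Lemma cocycle2M a b : is_cocycle2 G a -> is_cocycle2 G b ->
  is_cocycle2 G (fun x y => a x y * b x y).
Proof.
move=> a_coc b_coc; have a_neq0 := cocycle2_neq0 a_coc.
have b_neq0 := cocycle2_neq0 b_coc.
case: a_coc b_coc => _ a_out a_eq [_ b_out b_eq]; split.
- by move=> x y _ _; rewrite mulf_neq0.
- by move=> x y xyG; rewrite a_out ?b_out ?mulr1.
- move=> x y z xG yG zG.
  transitivity ((a x y * a (x * y)%g z) * (b x y * b (x * y)%g z)); first ring.
  by rewrite a_eq // b_eq //; ring.
Qed.

Lemma cocycle2V c : is_cocycle2 G c -> is_cocycle2 G (fun x y => (c x y)^-1).
Proof.
move=> c_coc; case: (c_coc) => _ c_out c_eq; split.
- by move=> x y _ _; rewrite invr_neq0 ?(cocycle2_neq0 c_coc).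
- by move=> x y xyG; rewrite c_out ?invr1.
- by move=> x y z xG yG zG; rewrite -!invfM c_eq.
Qed.

Lemma coh_classM a b : is_cocycle2 G a -> is_cocycle2 G b ->
  H2mul (coh_class G a) (coh_class G b) = coh_class G (fun x y => a x y * b x y).
Proof.
move=> a_coc b_coc; have b_neq0 := cocycle2_neq0 b_coc.
apply: functional_extensionality => c; apply: propositional_extensionality; split.
- case=> a' [b' [[a'_coc [f [f_neq0 a'E]]] [[b'_coc [g [g_neq0 b'E]]] ->]]].
  split; first exact: cocycle2M.
  exists (fun x => f x * g x); split=> [x xG|x y xG yG]; first by rewrite mulf_neq0 ?f_neq0 ?g_neq0.
  have fxy := f_neq0 _ (groupM xG yG); have gxy := g_neq0 _ (groupM xG yG).
  by rewrite a'E // b'E //; field; rewrite fxy gxy.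
- case=> c_coc [f [f_neq0 cE]].
  exists (fun x y => c x y / b x y), b; split; last split.
  + split; first by apply: cocycle2M => //; apply: cocycle2V.
    exists f; split=> // x y xG yG; rewrite cE //.
    by field; rewrite f_neq0 ?groupM ?b_neq0.
  + split=> //; exists (fun _ => 1); split=> [x _|x y _ _]; first exact: oner_neq0.
    by rewrite divr1 !mulr1.
  + by apply: cochain2_ext => x y; rewrite divfK.
Qed.

Lemma H2mulA P Q R : H2mul P (H2mul Q R) = H2mul (H2mul P Q) R.
Proof.
apply: functional_extensionality => c; apply: propositional_extensionality; split.
- case=> a [bc [Pa [[b [c' [Qb [Rc ->]]]] ->]]].
  exists (fun x y => a x y * b x y), c'; do ![split=> //]; first by exists a, b.
  by apply: cochain2_ext => x y; rewrite mulrA.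
- case=> ab [c' [[a [b [Pa [Qb ->]]]] [Rc ->]]].
  exists a, (fun x y => b x y * c' x y); do ![split=> //]; first by exists b, c'.
  by apply: cochain2_ext => x y; rewrite mulrA.
Qed.

Lemma H2mul1l c : is_cocycle2 G c -> H2mul (H2one G) (coh_class G c) = coh_class G c.
Proof.
move=> c_coc; rewrite /H2one coh_classM //; last exact: cocycle2_1.
by congr coh_class; apply: cochain2_ext => x y; rewrite mul1r.
Qed.

Lemma H2mul1r c : is_cocycle2 G c -> H2mul (coh_class G c) (H2one G) = coh_class G c.
Proof.
move=> c_coc; rewrite /H2one coh_classM //; last exact: cocycle2_1.
by congr coh_class; apply: cochain2_ext => x y; rewrite mulr1.
Qed.

Lemma H2inv_coh_class c :
  H2inv (coh_class G c) = coh_class G (fun x y => (c x y)^-1).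
Proof.
apply: functional_extensionality => c'; apply: propositional_extensionality.
have c'VK : (fun x y => ((c' x y)^-1)^-1) = c'.
  by apply: cochain2_ext => x y; rewrite invrK.
rewrite /H2inv /coh_class; split.
- case=> /cocycle2V; rewrite c'VK => c'_coc [f [f_neq0 c'E]].
  split=> //; exists (fun x => (f x)^-1); split=> [x xG|x y xG yG].
    by rewrite invr_neq0 ?f_neq0.
  by rewrite -[c' x y]invrK c'E // !invfM invrK.
- case=> c'_coc [f [f_neq0 c'E]]; split; first exact: cocycle2V.
  exists (fun x => (f x)^-1); split=> [x xG|x y xG yG].
    by rewrite invr_neq0 ?f_neq0.
  by rewrite c'E // !invfM invrK.
Qed.

Lemma H2mulV c : is_cocycle2 G c -> H2mul (coh_class G c) (H2inv (coh_class G c)) = H2one G.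
Proof.
move=> c_coc; rewrite H2inv_coh_class coh_classM //; last exact: cocycle2V.
by congr coh_class; apply: cochain2_ext => x y; rewrite mulfV ?(cocycle2_neq0 c_coc).
Qed.

Lemma H2mulVl c : is_cocycle2 G c -> H2mul (H2inv (coh_class G c)) (coh_class G c) = H2one G.
Proof.
move=> c_coc; rewrite H2inv_coh_class coh_classM //; last exact: cocycle2V.
by congr coh_class; apply: cochain2_ext => x y; rewrite mulVf ?(cocycle2_neq0 c_coc).
Qed.

End Cohomology.

Section BilinearForms.
Variables (k : fieldType) (n : nat).
Local Open Scope ring_scope.
Implicit Types (T B C : 'M[k]_n) (v w : 'rV[k]_n).

Lemma bform_conj T B v w : bform (T *m B *m T^T) v w = bform B (v *m T) (w *m T).
Proof. by rewrite /bform trmx_mul !mulmxA. Qed.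

Lemma bformD B C v w : bform (B + C) v w = bform B v w + bform C v w.
Proof. by rewrite /bform mulmxDr mulmxDl mxE. Qed.

Lemma bformN B v w : bform (- B) v w = - bform B v w.
Proof. by rewrite /bform mulmxN mulNmx mxE. Qed.

Lemma bform0 v w : bform (0 : 'M[k]_n) v w = 0.
Proof. by rewrite /bform mulmx0 mul0mx mxE. Qed.

End BilinearForms.

Section CompatibleData.
Variables (k : fieldType) (gT : finGroupType) (G : {group gT}) (u : gT)
  (n : nat) (rG : mx_representation k G n).
Local Open Scope ring_scope.
Implicit Types d e f : datum k gT n.

Definition dinv d : datum k gT n :=
  Datum (invmx (dT d)) (- (invmx (dT d) *m dB d *m (invmx (dT d))^T))
        (dalpha d)^-1%g (H2inv (dpsi d)).

Lemma intertwine_invmx (T : 'M[k]_n) (al : {perm gT}) :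
  al \in Aut G -> T \in unitmx ->
  (forall g (v : 'rV_n), g \in G -> v *m rG g *m T = v *m T *m rG (al g)) ->
  forall g (v : 'rV_n), g \in G -> v *m rG g *m invmx T = v *m invmx T *m rG (al^-1%g g).
Proof.
move=> alA T_unit T_int g v gG.
have alVgG : al^-1%g g \in G by rewrite Aut_closed ?groupV.
have := T_int _ (v *m invmx T) alVgG.
by rewrite (mulmxKV T_unit) permKV => <-; rewrite mulmxK.
Qed.

Lemma compatible_dunit : compatible u rG (dunit k G n).
Proof.
split=> /=.
- by rewrite group1 perm1.
- by split=> [|g v _]; rewrite ?unitmx1 // !mulmx1 perm1.
- by split=> *; rewrite !bform0.
- by exists (fun _ _ => 1); split=> //; apply: cocycle2_1.
Qed.

Lemma compatibleM d e : compatible u rG d -> compatible u rG e ->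
  compatible u rG (dmul d e).
Proof.
case: d => T B al ps [/= [alA alu] [T_unit T_int] [B_sym B_inv] [c [c_coc ->]]].
case: e => T' B' al' ps' [/= [alA' alu'] [T'_unit T'_int] [B'_sym B'_inv] [c' [c'_coc ->]]].
have al'G g : g \in G -> al' g \in G by move=> gG; rewrite Aut_closed.
split=> /=.
- by rewrite groupM // permM alu' alu.
- split=> [|g v gG]; first by rewrite unitmx_mul T_unit T'_unit.
  by rewrite !mulmxA T'_int // T_int ?al'G ?permM.
- split=> [v w|g v w gG]; first by rewrite !bformD !bform_conj B_sym B'_sym.
  by rewrite !bformD !bform_conj B'_inv // !T'_int // B_inv ?al'G.
- rewrite coh_classM //; exists (fun x y => c x y * c' x y).
  by split=> //; apply: cocycle2M.
Qed.

Lemma dmulA d e f : dmul d (dmul e f) = dmul (dmul d e) f.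
Proof.
case: d e f => T1 B1 a1 p1 [T2 B2 a2 p2] [T3 B3 a3 p3]; rewrite /dmul /=.
congr Datum.
- by rewrite mulmxA.
- by rewrite !trmx_mul mulmxDr mulmxDl !mulmxA addrA.
- by rewrite mulgA.
- by rewrite H2mulA.
Qed.

Lemma dmul1d d : compatible u rG d -> dmul (dunit k G n) d = d.
Proof.
case: d => T B al ps [_ _ _ [c [c_coc /= ->]]]; rewrite /dmul /=.
by rewrite mulmx1 mulmx0 mul0mx add0r mulg1 H2mul1l.
Qed.

Lemma dmuld1 d : compatible u rG d -> dmul d (dunit k G n) = d.
Proof.
case: d => T B al ps [_ _ _ [c [c_coc /= ->]]]; rewrite /dmul /=.
by rewrite !mul1mx trmx1 mulmx1 addr0 mul1g H2mul1r.
Qed.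

Lemma compatible_dinv d : compatible u rG d -> compatible u rG (dinv d).
Proof.
case: d => T B al ps [/= [alA alu] [T_unit T_int] [B_sym B_inv] [c [c_coc ->]]].
have TV_int := intertwine_invmx alA T_unit T_int.
split=> /=.
- by rewrite groupV -{1}alu permK.
- by split; [rewrite unitmx_inv | exact: TV_int].
- split=> [v w|g v w gG]; first by rewrite !bformN !bform_conj B_sym.
  by rewrite !bformN !bform_conj !TV_int // B_inv // Aut_closed ?groupV.
- rewrite H2inv_coh_class; exists (fun x y => (c x y)^-1).
  by split=> //; apply: cocycle2V.
Qed.

Lemma dmuldV d : compatible u rG d -> dmul d (dinv d) = dunit k G n.
Proof.
case: d => T B al ps [_ [T_unit _] _ [c [c_coc /= ->]]]; rewrite /dmul /dunit /=.
by rewrite mulVmx // addrN mulVg H2mulV.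
Qed.

Lemma dmulVd d : compatible u rG d -> dmul (dinv d) d = dunit k G n.
Proof.
case: d => T B al ps [_ [T_unit _] _ [c [c_coc /= ->]]]; rewrite /dmul /dunit /=.
rewrite mulmxV // mulgV H2mulVl // mulmxN mulNmx !mulmxA mulmxV // mul1mx.
by rewrite -mulmxA -trmx_mul mulmxV // trmx1 mulmx1 addNr.
Qed.

End CompatibleData.

Theorem lemma4p8 (k : closedFieldType) (hk : [pchar k]%R =i pred0)
  (gT : finGroupType) (G : {group gT}) (hab : abelian G)
  (u : gT) (huG : u \in G) (hu2 : #[u]%g = 2)
  (n : nat) (rG : mx_representation k G n)
  (hV : forall v : 'rV[k]_n, (v *m rG u = - v)%R) :
  (forall d d' : datum k gT n,
     compatible u rG d -> compatible u rG d' ->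
     compatible u rG (dmul d d')) /\
  is_group_set (compatible u rG) (@dmul k gT n) (dunit k G n).
Proof.
split; first exact: compatibleM.
split.
- exact: compatible_dunit.
- exact: compatibleM.
- by move=> d e f _ _ _; apply: dmulA.
- by move=> d dC; split; [apply: dmul1d dC | apply: dmuld1 dC].
- move=> d dC; exists (dinv d).
  by split; [apply: compatible_dinv dC | split; [apply: dmuldV dC | apply: dmulVd dC]].
Qed.
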